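(* Let $G=\{1,\dots,d\}^m$ and let $A\subseteq G$ satisfy $\mathsf{DAff}(A)=A$. If $\frac{|A|}{d^m}\ge\frac12$, then $$\dim\mathsf{Aff}(G)-\dim\mathsf{Aff}(A)\le 2d\,\frac{d^m-|A|}{d^m}.$$
   Context: For $z\in G$, $\sigma(z)\in\{0,1\}^{md}$ is the concatenation of the one-hot encodings of $z_1,\dots,z_m$. For $A\subseteq G$, $\mathsf{Aff}(A)\subseteq\mathbb{R}^{md}$ is the affine hull of $\{\sigma(z):z\in A\}$, and $\mathsf{DAff}(A)=\{z\in G:\sigma(z)\in\mathsf{Aff}(A)\}$ is the discrete affine hull. *)

From HB Require Import structures.
From mathcomp Require Import all_boot all_order all_algebra.
Set Implicit Arguments. Unset Strict Implicit. Unset Printing Implicit Defensive.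
Import Order.TTheory GRing.Theory Num.Theory.
Local Open Scope ring_scope.

(* The grid G = {1,...,d}^m, with {1,...,d} represented by 'I_d = {0,...,d-1}. *)
Definition grid (m d : nat) := {ffun 'I_m -> 'I_d}.

(* sigma(z) in R^{md}: concatenation of the one-hot encodings of z_1..z_m.
   Built as the m x d 0/1 matrix (row i = one-hot of z_i), flattened by mxvec. *)
Definition sigma (R : pzRingType) {m d : nat} (z : grid m d) : 'rV[R]_(m * d) :=
  mxvec (\matrix_(i < m, j < d) ((z i == j)%:R : R)).

Definition in_Aff (R : pzRingType) {m d : nat} (A : {set grid m d})
    (v : 'rV[R]_(m * d)) : Prop :=
  exists lam : grid m d -> R,
    \sum_(z in A) lam z = 1 /\ v = \sum_(z in A) lam z *: @sigma R m d z.

Definition DAff (R : pzRingType) {m d : nat} (A : {set grid m d}) : grid m d -> Prop :=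
  fun z => @in_Aff R m d A (@sigma R m d z).

(* dim Aff(A): dimension of the direction space of Aff(A), i.e. of the linear
   span of the differences sigma z - sigma z' (z, z' in A).  (For A nonempty
   this is the usual affine dimension.) *)
Definition dimAff (R : fieldType) {m d : nat} (A : {set grid m d}) : nat :=
  \rank (\sum_(z in A) \sum_(z' in A) <<@sigma R m d z - @sigma R m d z'>>)%MS.

Arguments sigma R {m d} z.
Arguments in_Aff R {m d} A v.
Arguments DAff R {m d} A z.
Arguments dimAff R {m d} A.

From HB Require Import structures.
From mathcomp Require Import all_boot all_order all_algebra.
From mathcomp Require Import zify ring lra.
Import Order.TTheory GRing.Theory Num.Theory.
Local Open Scope ring_scope.

(* Let c be the codimension of Aff(A) in Aff(G), the latter of dimension at
   most m(d-1).  Splitting A along one coordinate into s nonempty slices, a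
   slice loses at least s - 1 dimensions compared with A, since every value
   taken by the coordinate contributes a new direction.  Keeping the largest
   slice and inducting on the number of non-constant coordinates gives
   |A| <= d^m (1 - 1/d)^c.  Bernoulli's inequality turns this into
   c |A| <= (d-1) (d^m - |A|), and |A| >= d^m/2 finishes the proof. *)

Lemma bernoulli_pred (d t : nat) : ((d - t) * d ^ t <= d * d.-1 ^ t)%N.
Proof.
elim: t => [|t IH]; first by rewrite subn0 !expn0 !muln1.
have step : ((d - t.+1) * d <= (d - t) * d.-1)%N by nia.
rewrite !expnS mulnA; apply: leq_trans (leq_mul step (leqnn _)) _.
by rewrite mulnAC mulnC [(d * _)%N]mulnCA leq_mul2l IH orbT.
Qed.

Lemma bernoulli_succ (e c : nat) : (e ^ c * (e + c) <= e * e.+1 ^ c)%N.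
Proof.
elim: c => [|c IH]; first by rewrite !expn0 addn0 mul1n muln1.
have le_ec : (e ^ c <= e.+1 ^ c)%N by case: c {IH} => // c; rewrite leq_exp2r.
have -> : (e ^ c.+1 * (e + c.+1) = e * (e ^ c * (e + c) + e ^ c))%N.
  by rewrite expnS; ring.
by rewrite expnS leq_mul2l mulSn addnC leq_add ?orbT.
Qed.

Lemma expn_ratio_bound {N D e c : nat} : (0 < e)%N ->
  (N * e.+1 ^ c <= D * e ^ c)%N -> (c * N <= e * (D - N))%N.
Proof.
move=> e_gt0 le_ND.
have : (e ^ c * (N * (e + c)) <= e ^ c * (D * e))%N.
  have le1 := leq_mul (leqnn N) (bernoulli_succ e c).
  have le2 := leq_mul (leqnn e) le_ND.
  by apply: leq_trans (leq_trans (eq_leq _) le1)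
                      (leq_trans (eq_leq _) (leq_trans le2 (eq_leq _))); ring.
rewrite leq_mul2l expn_eq0 (negbTE (lt0n_neq0 e_gt0)) /= mulnBr.
lia.
Qed.

Section DirectionSpace.
Variables (R : fieldType) (m d : nat).
Local Notation G := (grid m d).
Local Notation sigma := (sigma R).

Definition dirmx (A : {set G}) : 'M[R]_(m * d) :=
  (\sum_(z in A) \sum_(z' in A) <<sigma z - sigma z'>>)%MS.

Lemma sub_dirmx {A : {set G}} {z z' : G} :
  z \in A -> z' \in A -> (sigma z - sigma z' <= dirmx A)%MS.
Proof.
move=> Az Az'; apply: (sumsmx_sup z) => //; apply: (sumsmx_sup z') => //.
by rewrite genmxE.
Qed.

Lemma dirmx_subP (A : {set G}) p (X : 'M[R]_(p, m * d)) :
  reflect {in A &, forall z z', (sigma z - sigma z' <= X)%MS} (dirmx A <= X)%MS.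
Proof.
apply: (iffP idP) => [sAX z z' Az Az' | sAX].
  exact: submx_trans (sub_dirmx Az Az') sAX.
apply/sumsmx_subP => z Az; apply/sumsmx_subP => z' Az'.
by rewrite genmxE; apply: sAX.
Qed.

Lemma dirmxS {A B : {set G}} : A \subset B -> (dirmx A <= dirmx B)%MS.
Proof.
move=> sAB; apply/dirmx_subP => z z' Az Az'.
by apply: sub_dirmx; apply: (subsetP sAB).
Qed.

Definition coordmx (i : 'I_m) (b : 'I_d) : 'cV[R]_(m * d) :=
  delta_mx (mxvec_index i b) 0.

Lemma sigma_coordmx (z : G) (i : 'I_m) (b : 'I_d) :
  sigma z *m coordmx i b = ((z i == b)%:R)%:M.
Proof.
apply/matrixP => p q; rewrite [p]ord1 [q]ord1 -colE !mxE.
by rewrite /sigma mxvecE mxE.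
Qed.

Lemma dirmx_sub_ker_coordmx (A : {set G}) (i : 'I_m) (b : 'I_d) :
  {in A, forall z : G, z i != b} -> (dirmx A <= kermx (coordmx i b))%MS.
Proof.
move=> Ab; apply/dirmx_subP => z z' Az Az'.
rewrite sub_kermx mulmxBl !sigma_coordmx.
by rewrite (negbTE (Ab z Az)) (negbTE (Ab z' Az')) subrr.
Qed.

Lemma rank_dirmx_drop_ltn {A : {set G}} (i : 'I_m) (x y : G) :
  x \in A -> y \in A -> x i != y i ->
  (\rank (dirmx [set z in A | z i != y i]) < \rank (dirmx A))%N.
Proof.
move=> Ax Ay xy.
set A' := [set z in A | z i != y i].
have sA'A : A' \subset A by apply/subsetP => z; rewrite inE => /andP[].
have A'ker : (dirmx A' <= kermx (coordmx i (y i)))%MS.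
  by apply: dirmx_sub_ker_coordmx => z; rewrite inE => /andP[].
have yx_notin : ~~ (sigma y - sigma x <= dirmx A')%MS.
  apply/negP => /submx_trans/(_ A'ker).
  rewrite sub_kermx mulmxBl !sigma_coordmx eqxx (negbTE xy) -raddfB subr0.
  by move/eqP/matrixP/(_ 0 0); rewrite !mxE; apply/eqP/oner_neq0.
rewrite ltn_neqAle mxrankS ?dirmxS // andbT; apply: contraNN yx_notin => eqA.
rewrite (eq_leqif (mxrank_leqif_sup (dirmxS sA'A))) in eqA.
exact: submx_trans (sub_dirmx Ay Ax) eqA.
Qed.

Local Notation slice A i a := [set z in A | z i == a].
Local Notation coord_image A i := [set z i | z : G in A].

Lemma rank_slice_add_card {A : {set G}} {i : 'I_m} {a : 'I_d} :
  slice A i a != set0 ->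
  (\rank (dirmx (slice A i a)) + #|coord_image A i| <= (\rank (dirmx A)).+1)%N.
Proof.
elim: {A}_.+1 {-2}A (ltnSn #|A|) => // n IH A ltAn slice_neq0.
case/set0Pn: (slice_neq0) => x; rewrite inE => /andP[Ax /eqP xa].
have [imA_a | /subsetPn[_ /imsetP[y Ay ->]]] := boolP (coord_image A i \subset [set a]).
  have -> : slice A i a = A.
    apply/setP => z; rewrite inE andb_idr // => Az.
    by rewrite -in_set1 (subsetP imA_a) // ; apply: imset_f.
  by rewrite -addn1 leq_add2l -(cards1 a) subset_leq_card.
rewrite inE => ya.
set A' := [set z in A | z i != y i].
have sliceA' : slice A' i a = slice A i a.
  apply/setP => z; rewrite !inE -andbA.
  by case: (z i =P a) => [->|]; rewrite ?andbF // eq_sym ya.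
have ltA'n : (#|A'| < n)%N.
  rewrite -ltnS; apply: leq_trans ltAn; rewrite ltnS; apply: proper_card.
  rewrite properE; apply/andP; split; first by apply/subsetP => z; rewrite inE => /andP[].
  by apply/subsetPn; exists y; rewrite // inE eqxx andbF.
have imA : (#|coord_image A i| <= #|coord_image A' i|.+1)%N.
  have : coord_image A i \subset y i |: coord_image A' i.
    apply/subsetP => _ /imsetP[z Az ->]; rewrite !inE.
    by case: eqP => //= /eqP zy; apply: imset_f; rewrite inE Az.
  by move/subset_leq_card/leq_trans; apply; rewrite cardsU1 -add1n leq_add2r leq_b1.
have := IH A' ltA'n; rewrite sliceA' => /(_ slice_neq0).
have : (\rank (dirmx A') < \rank (dirmx A))%N.
  by apply: rank_dirmx_drop_ltn Ax Ay _; rewrite xa eq_sym.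
lia.
Qed.

Lemma exists_large_slice {A : {set G}} (i : 'I_m) {x : G} : x \in A ->
  exists2 a, a \in coord_image A i &
    (#|A| <= #|coord_image A i| * #|slice A i a|)%N.
Proof.
move=> Ax; have xi_img : x i \in coord_image A i by apply: imset_f.
have [a a_img a_max] := arg_maxnP (fun b => #|slice A i b|) xi_img.
exists a => //; rewrite -sum_nat_const -sum1_card.
rewrite (partition_big (fun z : G => z i) (mem (coord_image A i))) => [|z Az];
  last exact: imset_f.
apply: leq_sum => b b_img; apply: leq_trans (a_max b b_img).
by rewrite -sum1_card; apply/eq_leq/eq_bigl => z; rewrite inE.
Qed.

Definition agree_from (A : {set G}) (j : nat) :=
  {in A &, forall z z' : G, forall i : 'I_m, (j <= i)%N -> z i = z' i}.

Lemma card_le1_agree_from0 (A : {set G}) : agree_from A 0 -> (#|A| <= 1)%N.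
Proof.
move=> agreeA; case: (set_0Vmem A) => [->|[x Ax]]; first by rewrite cards0.
rewrite -(cards1 x); apply/subset_leq_card/subsetP => z Az.
by rewrite inE; apply/eqP/ffunP => i; apply: agreeA.
Qed.

Lemma agree_from_slice {A : {set G}} {j : nat} {lt_jm : (j < m)%N} (a : 'I_d) :
  agree_from A j.+1 -> agree_from (slice A (Ordinal lt_jm) a) j.
Proof.
move=> agreeA z z'; rewrite !inE => /andP[Az /eqP za] /andP[Az' /eqP z'a] i.
rewrite leq_eqVlt => /predU1P[ji|]; last exact: agreeA.
by rewrite (_ : i = Ordinal lt_jm) ?za ?z'a //; apply: val_inj.
Qed.

(* Thanks to the truncated subtraction, k = 0 is always allowed: then the
   bound reads |A| <= d^j. *)
Lemma card_codim_bound {j : nat} {A : {set G}} : (j <= m)%N -> agree_from A j ->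
  forall k, (k <= j * d.-1 - \rank (dirmx A))%N ->
  (#|A| * d ^ k <= d ^ j * d.-1 ^ k)%N.
Proof.
elim: j A => [|j IH] A le_jm agreeA k.
  rewrite mul0n leqn0 => /eqP ->; rewrite !expn0 !muln1.
  exact: card_le1_agree_from0.
rewrite mulSn => le_k.
have [->|[x Ax]] := set_0Vmem A; first by rewrite cards0.
pose i := Ordinal le_jm.
have [a a_img le_A] := exists_large_slice i Ax.
have S_neq0 : slice A i a != set0.
  by case/imsetP: a_img => z Az ->; apply/set0Pn; exists z; rewrite inE Az eqxx.
set S := slice A i a in le_A S_neq0 *; set s := #|coord_image A i| in le_A *.
have le_rank := rank_slice_add_card S_neq0; rewrite -/S -/s in le_rank.
have s_gt0 : (0 < s)%N by rewrite card_gt0; apply/set0Pn; exists a.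
have le_sd : (s <= d)%N by rewrite -[X in (_ <= X)%N]card_ord max_card.
pose t := minn k (d - s).
have le_S : (#|S| * d ^ (k - t) <= d ^ j * d.-1 ^ (k - t))%N.
  by apply: IH (ltnW le_jm) (agree_from_slice a agreeA) _ _; rewrite -/i -/S /t; lia.
have le_s : (s * d ^ t <= d * d.-1 ^ t)%N.
  apply: leq_trans (bernoulli_pred d t); rewrite leq_mul2r; apply/orP; right; lia.
rewrite -(subnK (geq_minl k (d - s))) -/t !expnD expnS.
apply: leq_trans (leq_mul le_A (leqnn _)) _; rewrite (mulnC s) mulnACA.
by apply: leq_trans (leq_mul le_S le_s) _; rewrite mulnACA (mulnC (d ^ j)%N).
Qed.

Definition blocksum_mx : 'M[R]_(m * d, m) :=
  \matrix_(p, i) \sum_(j < d) (vec_mx ('e_p : 'rV[R]_(m * d)) : 'M_(m, d)) i j.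

Lemma row_blocksum_mx (i : 'I_m) (a : 'I_d) :
  row (mxvec_index i a) blocksum_mx = 'e_i.
Proof.
apply/rowP => i'; rewrite !mxE vec_mx_delta (bigD1 a) //= big1 => [|j /negbTE ja].
  by rewrite !mxE eqxx andbT addr0.
by rewrite mxE ja andbF.
Qed.

Lemma sigma_sum_delta (z : G) : sigma z = \sum_i 'e_(mxvec_index i (z i)).
Proof.
have -> : \sum_i 'e_(mxvec_index i (z i)) = mxvec (\sum_i delta_mx i (z i)) :> 'rV[R]_(m * d).
  by rewrite linear_sum; apply: eq_bigr => i _; rewrite -mxvec_delta.
congr mxvec; apply/matrixP => i j.
rewrite !mxE summxE (bigD1 i) //= big1 => [|i' i'i];
  last by rewrite mxE eq_sym (negbTE i'i).
by rewrite mxE eqxx addr0 eq_sym.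
Qed.

Lemma sigma_blocksum_mx (z : G) : sigma z *m blocksum_mx = \sum_(i < m) 'e_i.
Proof.
rewrite sigma_sum_delta mulmx_suml; apply: eq_bigr => i _.
by rewrite -rowE row_blocksum_mx.
Qed.

Lemma rank_blocksum_mx : (0 < d)%N -> \rank blocksum_mx = m.
Proof.
move=> d_gt0; apply/eqP; rewrite eqn_leq rank_leq_col /=.
pose T : 'M[R]_(m, m * d) := \matrix_i 'e_(mxvec_index i (Ordinal d_gt0)).
have TS1 : T *m blocksum_mx = 1%:M.
  by apply/row_matrixP => i; rewrite row_mul rowK -rowE row_blocksum_mx row1.
by rewrite -[X in (X <= _)%N](mxrank1 R m) -TS1 mxrankM_maxr.
Qed.

Lemma rank_dirmx_setT : (\rank (dirmx setT) <= m * d.-1)%N.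
Proof.
have [d0|d_gt0] := posnP d; first by apply: leq_trans (rank_leq_col _) _; rewrite d0.
have ker : (dirmx setT <= kermx blocksum_mx)%MS.
  by apply/dirmx_subP => z z' _ _; rewrite sub_kermx mulmxBl !sigma_blocksum_mx subrr.
apply: leq_trans (mxrankS ker) _.
by rewrite mxrank_ker rank_blocksum_mx // -subn1 mulnBr muln1.
Qed.

Lemma dimAffE (A : {set G}) : dimAff R A = \rank (dirmx A).
Proof. by []. Qed.

Lemma codim_dirmx_le (A : {set G}) : (d ^ m <= 2 * #|A|)%N ->
  ((\rank (dirmx setT) - \rank (dirmx A)) * d ^ m <= 2 * d * (d ^ m - #|A|))%N.
Proof.
move=> le_half; set c := (_ - _)%N.
have agreeA : agree_from A m by move=> z z' _ _ i; rewrite leqNgt ltn_ord.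
have le_c : (c <= m * d.-1 - \rank (dirmx A))%N.
  by have := rank_dirmx_setT; rewrite /c; lia.
have := card_codim_bound (leqnn m) agreeA c le_c.
have [->|c_gt0] := posnP c; first by rewrite mul0n.
have e_gt0 : (0 < d.-1)%N.
  by rewrite lt0n; apply: contraTneq c_gt0 => e0; move: le_c; rewrite e0 muln0; lia.
have d_gt0 : (0 < d)%N by lia.
rewrite -[X in (_ * X ^ c <= _)%N](prednK d_gt0) => /(expn_ratio_bound e_gt0) le_cA.
apply: leq_trans (leq_mul (leqnn c) le_half) _.
rewrite mulnCA -mulnA leq_mul2l; apply/orP; right.
by apply: leq_trans le_cA _; rewrite leq_mul2r leq_pred orbT.
Qed.

End DirectionSpace.

Theorem lemma3 (R : realFieldType) (m d : nat) (A : {set grid m d}) :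
  (forall z : grid m d, DAff R A z <-> z \in A) ->
  #|A|%:R / (d ^ m)%:R >= 1 / 2 :> R ->
  (dimAff R [set: grid m d])%:R - (dimAff R A)%:R
    <= 2 * d%:R * (((d ^ m)%:R - #|A|%:R) / (d ^ m)%:R) :> R.
Proof.
(* The bound holds for every A, closed under DAff or not. *)
move=> _ half.
have D_gt0 : (0 < d ^ m)%N.
  by rewrite lt0n; apply: contraTneq half => ->; rewrite invr0 mulr0; lra.
have le_half : (d ^ m <= 2 * #|A|)%N.
  by rewrite ler_pdivlMr ?ltr0n // in half; rewrite -(ler_nat R) natrM; lra.
have le_AD : (#|A| <= d ^ m)%N.
  by have := max_card (mem A); rewrite card_ffun !card_ord.
have le_rank := mxrankS (dirmxS R _ _ (subsetT A)).
rewrite !dimAffE -(natrB _ le_rank) -(natrB _ le_AD) mulrA ler_pdivlMr ?ltr0n //.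
by rewrite -[2]/(2%:R) -!natrM ler_nat codim_dirmx_le.
Qed.
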